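(* Let $G=(V,E)$ be a finite graph and let $\underline{r}^G=(r_v)_{v\in V}\in\mathbb{Z}^{V}$. Let $H$ be an arbitrary $2$-cover of $G$, and let $G\times K_2$ be the bipartite double cover of $G$. Let $\underline{r}$ denote the vector induced by $\underline{r}^G$ on $H$ and on $G\times K_2$, i.e. each lift $u'$ of a vertex $u\in V$ gets value $r_{u'}=r_u$. Then $$h_{\underline{r}}(G\times K_2)\geq h_{\underline{r}}(H).$$ In other words, for any $\underline{r}\in\mathbb{Z}^{V}$, among all $2$-covers $H$ of $G$ the quantity $h_{\underline{r}}(H)$ is maximized by $G\times K_2$.
   Context: A $2$-cover of $G$ is a graph with vertex set $V\times\{0,1\}$ obtained by choosing, for every edge $uv\in E$, either the pair of edges $(u,0)(v,0),(u,1)(v,1)$ or the pair $(u,0)(v,1),(u,1)(v,0)$, and having no other edges. The bipartite double cover $G\times K_2$ is the $2$-cover in which the second choice is made for every edge. For a graph $F$ and $\underline{r}=(r_v)\in\mathbb{Z}^{V(F)}$, $h_{\underline{r}}(F)$ denotes the number of subgraphs (edge subsets) $S$ of $F$ such that every vertex $v$ is incident to exactly $r_v$ edges of $S$. *)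

From HB Require Import structures.
From mathcomp Require Import all_boot all_order all_algebra.
Set Implicit Arguments. Unset Strict Implicit. Unset Printing Implicit Defensive.

(* A finite simple graph is a symmetric irreflexive relation e on a finType. *)

Definition edges (V : finType) (f : rel V) : {set {set V}} :=
  [set [set p.1; p.2] | p in [set p : V * V | f p.1 p.2]].

Definition h_r (V : finType) (f : rel V) (r : V -> int) : nat :=
  #|[set S : {set {set V}} | (S \subset edges f) &&
       [forall v : V, (#|[set g in S | v \in g]| : int) == r v]]|.

(* The 2-cover of (T, e) determined by a choice s of "crossing" (true) or
   "parallel" (false) for every edge {u,v} (s is read on the edge as the set
   [set u; v]).  For a parallel edge uv we have the edges
   (u,0)(v,0),(u,1)(v,1); for a crossing one (u,0)(v,1),(u,1)(v,0). *)
Definition two_cover (T : finType) (e : rel T) (s : {set T} -> bool)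
  : rel (T * bool) :=
  fun x y => e x.1 y.1 && ((x.2 (+) y.2) == s [set x.1; y.1]).

Definition bip_double_cover (T : finType) (e : rel T) : rel (T * bool) :=
  two_cover e (fun _ => true).

Definition lift_r (T : finType) (r : T -> int) : T * bool -> int :=
  fun x => r x.1.

(* Encode a subgraph of a 2-cover by the lifts of the edges of G that it uses.
   An edge used by both or by neither lift contributes equally to both lifts of
   each vertex, so the degree constraints say that at every vertex the edges used
   once split evenly between the two levels.  Pair these half-edges at each vertex
   by a level-reversing involution rho.  For fixed rho, the choices of lifts of the
   singly used edges that make rho level-reversing form a coset of a group that
   does not depend on the cover, and for G x K_2 this coset is nonempty: rho and
   the involution exchanging the two ends of an edge have a common proper
   2-colouring, because their composite reverses its own orbits.  Translating by
   a fixed element maps the pairs (subgraph, rho) of any 2-cover injectively to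
   pairs for G x K_2, and the number of admissible rho depends only on the level
   counts, which are preserved; weighting each pair by the inverse of that number
   yields the inequality. *)

From HB Require Import structures.
From mathcomp Require Import all_boot all_order all_algebra.
From mathcomp Require Import fingroup perm.
Set Implicit Arguments. Unset Strict Implicit. Unset Printing Implicit Defensive.

Import Order.TTheory GRing.Theory Num.Theory.

Lemma fibres_perm (E : finType) (I : eqType) (f1 f2 : E -> I) :
  (forall i, #|[set x | f1 x == i]| = #|[set x | f2 x == i]|) ->
  exists phi : {perm E}, forall x, f1 (phi x) = f2 x.
Proof.
move=> eq_fib.
pose fib (f : E -> I) i := enum [set y | f y == i].
have fibE (f : E -> I) i y : (y \in fib f i) = (f y == i) by rewrite mem_enum inE.
pose idx x := index x (fib f2 (f2 x)).
have idx_lt x : idx x < size (fib f1 (f2 x)).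
  by rewrite -cardE eq_fib cardE index_mem fibE.
pose phi x := nth x (fib f1 (f2 x)) (idx x).
have phiE x : f1 (phi x) = f2 x by apply/eqP; rewrite -fibE mem_nth.
have phi_inj : injective phi.
  move=> x y eq_phi; have eq_f2 : f2 x = f2 y by rewrite -phiE eq_phi phiE.
  have idx_y : idx y < size (fib f1 (f2 x)) by rewrite eq_f2.
  have : idx x = idx y.
    apply/eqP; rewrite -(nth_uniq x (idx_lt x) idx_y) ?enum_uniq //.
    by rewrite -/(phi x) eq_phi /phi eq_f2 (set_nth_default y) -?eq_f2.
  rewrite /idx eq_f2 => /(congr1 (nth x (fib f2 (f2 y)))).
  by rewrite !nth_index ?fibE ?eq_f2.
by exists (perm phi_inj) => x; rewrite permE.
Qed.

Section ImsetPreimset.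
Variables (aT rT : finType) (f : aT -> rT) (A : {set aT}).

Lemma setI_preimset_imset (Z : {set aT}) : {in A &, injective f} -> Z \subset A ->
  A :&: f @^-1: (f @: Z) = Z.
Proof.
move=> f_inj /subsetP subZ; apply/setP => z; rewrite !inE.
apply/andP/idP => [[zA /imsetP[y yZ eq_f]] | zZ]; last by rewrite subZ ?imset_f.
by rewrite (f_inj _ _ zA (subZ y yZ) eq_f).
Qed.

Lemma imset_setI_preimset (S : {set rT}) : S \subset f @: A -> f @: (A :&: f @^-1: S) = S.
Proof.
move=> /subsetP subS; apply/setP => E; apply/imsetP/idP => [[z] | ES].
  by rewrite !inE => /andP[_ ?] ->.
by have /imsetP[z zA E_eq] := subS E ES; exists z; rewrite // !inE zA -E_eq ES.
Qed.

Lemma card_sep_imset (Z : {set aT}) (P : pred rT) : {in Z &, injective f} ->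
  #|[set y in f @: Z | P y]| = #|[set z in Z | P (f z)]|.
Proof.
move=> f_inj; rewrite -(card_in_imset (sub_in2 _ f_inj)) => [|z]; last first.
  by rewrite inE => /andP[].
apply: eq_card => y; rewrite !inE; apply/andP/imsetP => [[/imsetP[z zZ ->] Pz] | [z]].
  by exists z; rewrite ?inE ?zZ.
by rewrite inE => /andP[zZ Pz] ->; rewrite imset_f.
Qed.

End ImsetPreimset.

Section LevelPairings.
Variables (E : finType) (I : eqType).
Implicit Types (cls : E -> option (I * bool)) (rho : E -> E).

Definition flip_level (c : option (I * bool)) := omap (fun p => (p.1, ~~ p.2)) c.

Lemma flip_levelK : involutive flip_level.
Proof. by case=> [[i b]|] //=; rewrite negbK. Qed.

(* [cls x = Some (i, b)]: x lies in class [i] at level [b]; [cls x = None]: x is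
   to be fixed. *)
Definition level_pairing cls rho :=
  [forall x, [&& rho (rho x) == x, cls (rho x) == flip_level (cls x)
              & (cls x == None) ==> (rho x == x)]].

Lemma level_pairingP cls rho :
  reflect (forall x, [/\ rho (rho x) = x, cls (rho x) = flip_level (cls x)
                       & cls x = None -> rho x = x])
          (level_pairing cls rho).
Proof.
apply: (iffP forallP) => [lp x | lp x].
  have /and3P[/eqP rhoK /eqP cls_rho /implyP fix_x] := lp x.
  by split=> // /eqP /fix_x /eqP.
have [-> -> fix_x] := lp x; rewrite !eqxx; apply/implyP=> /eqP/fix_x->.
by rewrite eqxx.
Qed.

Definition balanced cls :=
  forall i b, #|[set x | cls x == Some (i, b)]| = #|[set x | cls x == Some (i, ~~ b)]|.

Lemma level_pairing_balanced cls rho : level_pairing cls rho -> balanced cls.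
Proof.
move=> /level_pairingP lp i b.
have rhoK : involutive rho by move=> x; have [] := lp x.
rewrite -(card_imset _ (inv_inj rhoK)) (can_imset_pre _ rhoK).
apply: eq_card => x; rewrite !inE; have [_ -> _] := lp x.
case: (cls x) => [[j c]|] //=.
by rewrite !(inj_eq (@Some_inj _)) !xpair_eqE; case: b; case: c.
Qed.

Lemma level_pairing_exists cls :
  balanced cls -> exists rho : {ffun E -> E}, level_pairing cls rho.
Proof.
move=> bal.
have [phi phiE] : exists phi : {perm E}, forall x, cls (phi x) = flip_level (cls x).
  apply: fibres_perm => c.
  have -> : [set x | flip_level (cls x) == c] = [set x | cls x == flip_level c].
    by apply/setP => x; rewrite !inE (inv_eq flip_levelK).
  by case: c => [[i b]|] //=; rewrite bal.
pose rho x := if cls x is Some (_, b) then (if b then phi x else (phi^-1)%g x) else x.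
exists [ffun x => rho x]; apply/level_pairingP => x; rewrite !ffunE /rho.
case cls_x: (cls x) => [[i []]|] //.
- by rewrite phiE cls_x /= permK; split.
- have cls_phiVx : cls ((phi^-1)%g x) = Some (i, true).
    by apply: (can_inj flip_levelK); rewrite -phiE permKV cls_x.
  by rewrite cls_phiVx permKV; split.
- by rewrite cls_x; split.
Qed.

Lemma card_level_pairing_le cls1 cls2 :
    (forall c, #|[set x | cls1 x == c]| = #|[set x | cls2 x == c]|) ->
  #|[set rho : {ffun E -> E} | level_pairing cls2 rho]| <=
  #|[set rho : {ffun E -> E} | level_pairing cls1 rho]|.
Proof.
move=> /fibres_perm[phi phiE].
pose conj (rho : {ffun E -> E}) := [ffun x => phi (rho ((phi^-1)%g x))].
have conj_inj : injective conj.
  move=> rho1 rho2 /ffunP eq_conj; apply/ffunP => x.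
  by have := eq_conj (phi x); rewrite !ffunE permK => /perm_inj.
rewrite -(card_imset _ conj_inj); apply/subset_leq_card/subsetP => g /imsetP[rho].
rewrite inE => /level_pairingP lp ->; rewrite inE; apply/level_pairingP => x.
have [rhoK cls_rho fix_rho] := lp ((phi^-1)%g x).
rewrite !ffunE permK rhoK permKV phiE cls_rho -phiE permKV; split=> // cls_x.
by rewrite fix_rho ?permKV // -phiE permKV.
Qed.

End LevelPairings.

Section TwoColouring.
Variables (E : finType) (X : {set E}) (R rho : E -> E).
Hypotheses (RK : involutive R) (rhoK : involutive rho).
Hypotheses (R_in : {in X, forall x, R x \in X}) (rho_in : {in X, forall x, rho x \in X}).
Hypotheses (R_neq : {in X, forall x, R x != x}) (rho_neq : {in X, forall x, rho x != x}).

Let pi := R \o rho.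

Let pi_inj : injective pi.
Proof. exact: inj_comp (inv_inj RK) (inv_inj rhoK). Qed.

Let pi_rho_pi x : pi (rho (pi x)) = rho x.
Proof. by rewrite /pi /= rhoK RK. Qed.

Let iter_pi_in n x : x \in X -> iter n pi x \in X.
Proof. by move=> xX; elim: n => //= n IH; apply/R_in/rho_in. Qed.

Let rho_iter_pi n x j : rho x = iter n pi x -> j <= n ->
  rho (iter j pi x) = iter (n - j) pi x.
Proof.
move=> rho_x; elim: j => [_|j IH lt_jn]; first by rewrite subn0.
by apply: pi_inj; rewrite -iterS subnSK // iterS pi_rho_pi IH // ltnW.
Qed.

(* Since pi (rho (pi x)) = rho x, rho reverses every pi-orbit; if rho x were on
   the orbit of x, rho or R would fix the middle point of the arc between them. *)
Let not_fconnect_rho x : x \in X -> ~~ fconnect pi x (rho x).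
Proof.
move=> xX; apply/negP => /iter_findex; move: (findex _ _ _) => n /esym rho_x.
have y_in := iter_pi_in n./2 xX; set y := iter n./2 pi x in y_in.
have half_le : n./2 <= n by rewrite -{2}[n]odd_double_half -addnn addnA leq_addl.
have := rho_iter_pi rho_x half_le.
rewrite -[n in n - _]odd_double_half -addnn addnA addnK -/y.
case: (odd n) => [|/=]; rewrite ?add1n ?add0n => rho_y.
  by have := R_neq (rho_in y_in); rewrite {2}rho_y iterS -/y /pi /= eqxx.
by have := rho_neq y_in; rewrite rho_y eqxx.
Qed.

Lemma involutions_two_colouring :
  exists c : E -> bool, {in X, forall x, c (R x) != c x /\ c (rho x) != c x}.
Proof.
have sym_pi : connect_sym (frel pi) := fconnect_sym pi_inj.
have root_pi y : froot pi (pi y) = froot pi y.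
  by symmetry; apply/(fingraph.rootP sym_pi); apply: fconnect1.
(* R x lies on the pi-orbit of rho x and rho (R x) on that of x, so R x and rho x
   both get the colour opposite to that of x. *)
pose c x := enum_rank (froot pi x) < enum_rank (froot pi (rho x)).
exists c => x xX.
have rank_neq : (enum_rank (froot pi x) : nat) != enum_rank (froot pi (rho x)).
  by rewrite val_eqE (inj_eq enum_rank_inj) root_connect ?not_fconnect_rho.
have R_rho : R x = pi (rho x) by rewrite /pi /= rhoK.
have c_rho : c (rho x) = (enum_rank (froot pi (rho x)) < enum_rank (froot pi x)).
  by rewrite /c rhoK.
have c_R : c (R x) = c (rho x).
  by rewrite c_rho /c R_rho root_pi -[froot pi (rho (pi _))]root_pi pi_rho_pi rhoK.
suff c_neq : (enum_rank (froot pi (rho x)) < enum_rank (froot pi x)) != c x.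
  by rewrite c_R c_rho.
by rewrite /c; case: ltngtP rank_neq.
Qed.

End TwoColouring.

Section WeightedCount.
Local Open Scope ring_scope.

Lemma card_weighted_sum (F : numFieldType) (I J : finType) (A : {set I})
    (B : I -> {set J}) : (forall i, i \in A -> B i != set0) ->
  (#|A|%:R : F) = \sum_(p : I * J | (p.1 \in A) && (p.2 \in B p.1)) (#|B p.1|%:R)^-1.
Proof.
move=> B_neq0.
rewrite -(pair_big_dep (mem A) (fun i j => j \in B i) (fun i _ => (#|B i|%:R)^-1)) /=.
rewrite -sum1_card natr_sum; apply: eq_bigr => i Ai.
by rewrite sumr_const -[RHS]mulr_natr mulVf // pnatr_eq0 -lt0n card_gt0 B_neq0.
Qed.

Lemma ler_sum_inj (F : numDomainType) (I J : finType) (P : {set I}) (Q : {set J})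
    (f : I -> J) (u : I -> F) (v : J -> F) : {in P &, injective f} ->
    {in P, forall i, f i \in Q /\ u i <= v (f i)} -> {in Q, forall j, 0 <= v j} ->
  \sum_(i in P) u i <= \sum_(j in Q) v j.
Proof.
move=> f_inj f_PQ v_ge0.
apply: (@le_trans _ _ (\sum_(i in P) v (f i))); first by apply: ler_sum => i /f_PQ[].
have fP_Q : f @: P \subset Q by apply/subsetP => _ /imsetP[i /f_PQ[+ _] ->].
rewrite -(big_imset _ f_inj) [X in _ <= X](big_setID (f @: P)) /= (setIidPr fP_Q) lerDl.
by apply: sumr_ge0 => j; rewrite inE => /andP[_ /v_ge0].
Qed.

End WeightedCount.

Section Lifts.
Variables (T : finType) (O : {set T * T}) (r : T -> int).
Local Notation dart := ((T * T) * bool)%type.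
Implicit Types (sigma : T * T -> bool) (Z : {set dart}).
Implicit Types (x : dart) (M : {set T * T}) (k d : T * T -> bool).

(* A dart (g, a) with g = (u, v) stands for the lift (u, a) -- (v, a (+) sigma g)
   of g in the 2-cover with signing sigma; a dart (g, t) also stands for the
   half-edge of g at [endpoint (g, t)], which [lift_through sigma (g, t) b] meets
   at level b.  A subgraph of the cover is a set Z of darts. *)
Definition endpoint x : T := if x.2 then x.1.2 else x.1.1.

Definition lift_through sigma x b := (x.1, b (+) (x.2 && sigma x.1)).

Definition degree sigma Z w b :=
  #|[set x | (endpoint x == w) && (lift_through sigma x b \in Z)]|.

Definition valid sigma Z := (Z \subset [set z | z.1 \in O]) &&
  [forall w, forall b, (degree sigma Z w b : int) == r w].

Definition single Z := [set g | ((g, false) \in Z) != ((g, true) \in Z)].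

Definition lift_choice Z : {ffun T * T -> bool} := [ffun g => (g, true) \in Z].

Definition level sigma k x := k x.1 (+) (x.2 && sigma x.1).

Definition lift_class sigma Z x :=
  if x.1 \in single Z then Some (endpoint x, level sigma (lift_choice Z) x) else None.

Definition doubled Z w :=
  #|[set x | [&& endpoint x == w, (x.1, false) \in Z & (x.1, true) \in Z]]|.

Lemma degree_split sigma Z w b :
  degree sigma Z w b = doubled Z w + #|[set x | lift_class sigma Z x == Some (w, b)]|.
Proof.
have memZ x c : ((x.1, c) \in Z) = if c then (x.1, true) \in Z else (x.1, false) \in Z.
  by case: c.
rewrite /degree -(cardsID [set x | ((x.1, false) \in Z) && ((x.1, true) \in Z)]).
congr (_ + _); apply: eq_card => x;
  rewrite !inE /lift_through (memZ x (_ (+) _)) /lift_class /single /level ?inE ?ffunE;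
  case: (x.2 && sigma x.1); case: ((x.1, false) \in Z); case: ((x.1, true) \in Z);
  by case: b; rewrite /= ?(inj_eq (@Some_inj _)) ?xpair_eqE; case: (endpoint x == w).
Qed.

Lemma valid_balanced sigma Z : valid sigma Z -> balanced (lift_class sigma Z).
Proof.
case/andP=> _ /forallP deg_r w b; apply/eqP.
have /forallP/(_ b)/eqP := deg_r w; have /forallP/(_ (~~ b))/eqP := deg_r w.
by rewrite !degree_split => <- /eqP; rewrite eqz_nat eqn_add2l.
Qed.

Lemma card_lift_class_levels sigma Z w :
  #|[set x | lift_class sigma Z x == Some (w, true)]| +
  #|[set x | lift_class sigma Z x == Some (w, false)]| =
  #|[set x | (x.1 \in single Z) && (endpoint x == w)]|.
Proof.
rewrite -[RHS](cardsID [set x | level sigma (lift_choice Z) x]); congr (_ + _);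
  apply: eq_card => x; rewrite !inE /lift_class /level !inE ffunE;
  case: (x.2 && sigma x.1); case: ((x.1, false) \in Z); case: ((x.1, true) \in Z);
  by rewrite /= ?(inj_eq (@Some_inj _)) ?xpair_eqE ?andbT ?andbF.
Qed.

Lemma lift_class_fibres_eq sigma1 sigma2 Z1 Z2 : single Z1 = single Z2 ->
    balanced (lift_class sigma1 Z1) -> balanced (lift_class sigma2 Z2) ->
  forall c, #|[set x | lift_class sigma1 Z1 x == c]| =
            #|[set x | lift_class sigma2 Z2 x == c]|.
Proof.
move=> eq_single bal1 bal2 [[w b]|]; last first.
  by apply: eq_card => x; rewrite !inE /lift_class eq_single; case: ifP.
have := card_lift_class_levels sigma1 Z1 w; rewrite eq_single.
rewrite -(card_lift_class_levels sigma2 Z2 w) -(bal1 w true) -(bal2 w true).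
rewrite !addnn => /double_inj eq_true.
by case: b; rewrite // bal1 bal2.
Qed.

Definition toggle Z d := [set z | (z.1, z.2 (+) d z.1) \in Z].

Lemma toggleK d : involutive (toggle^~ d).
Proof. by move=> Z; apply/setP => -[g a]; rewrite !inE /= addbK. Qed.

Lemma single_toggle Z d : single (toggle Z d) = single Z.
Proof. by apply/setP => g; rewrite !inE /=; case: (d g); rewrite // eq_sym. Qed.

Lemma lift_choice_toggle Z d g :
  g \in single Z -> lift_choice (toggle Z d) g = lift_choice Z g (+) d g.
Proof.
rewrite !ffunE !inE /=.
by case: (d g); case: ((g, true) \in Z); case: ((g, false) \in Z).
Qed.

Lemma doubled_toggle Z d w : doubled (toggle Z d) w = doubled Z w.
Proof.
apply: eq_card => x; rewrite !inE /=.
by case: (d x.1); rewrite //= [((x.1, true) \in Z) && _]andbC.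
Qed.

Lemma toggle_sub Z d : Z \subset [set z | z.1 \in O] ->
  toggle Z d \subset [set z | z.1 \in O].
Proof.
by move=> /subsetP subZ; apply/subsetP => z; rewrite inE => /subZ; rewrite !inE.
Qed.

Definition reverses sigma M (rho : dart -> dart) k :=
  [forall x, (x.1 \in M) ==> (level sigma k (rho x) != level sigma k x)].

Lemma eq_reverses sigma M rho k1 k2 :
    (forall x, x.1 \in M -> (rho x).1 \in M) -> {in M, k1 =1 k2} ->
  reverses sigma M rho k1 = reverses sigma M rho k2.
Proof.
move=> rhoM eq_k; apply: eq_forallb => x; apply/implyP/implyP => rev_x xM;
  by move: (rev_x xM); rewrite /level !eq_k ?rhoM.
Qed.

(* The sigma'-level of k1 + k2 + k3 is the sum of the sigma-levels of k1, k2 and the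
   sigma'-level of k3, as the two sigma-corrections cancel: the choices reversed by
   rho form cosets of one group for all signings. *)
Lemma reverses_xor sigma sigma' M rho k1 k2 k3 :
    reverses sigma M rho k1 -> reverses sigma M rho k2 ->
    reverses sigma' M rho k3 ->
  reverses sigma' M rho (fun g => k1 g (+) k2 g (+) k3 g).
Proof.
have levelE y : level sigma' (fun g => k1 g (+) k2 g (+) k3 g) y =
    level sigma k1 y (+) level sigma k2 y (+) level sigma' k3 y.
  rewrite /level.
  by case: (k1 _) (k2 _) (k3 _) (_ && sigma _) (_ && sigma' _) => [] [] [] [] [].
have xor_neq (a1 b1 a2 b2 a3 b3 : bool) :
  a1 != b1 -> a2 != b2 -> a3 != b3 -> a1 (+) a2 (+) a3 != b1 (+) b2 (+) b3.
  by case: a1 b1 a2 b2 a3 b3 => [] [] [] [] [] [].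
move=> /forallP rev1 /forallP rev2 /forallP rev3; apply/forallP => x.
apply/implyP => xM; rewrite !levelE.
by apply: xor_neq; [move: (rev1 x) | move: (rev2 x) | move: (rev3 x)] => /implyP/(_ xM).
Qed.

Lemma level_pairing_single sigma Z rho x :
    level_pairing (lift_class sigma Z) rho -> x.1 \in single Z ->
  [/\ (rho x).1 \in single Z, endpoint (rho x) = endpoint x
    & level sigma (lift_choice Z) (rho x) = ~~ level sigma (lift_choice Z) x].
Proof.
move=> /level_pairingP/(_ x)[_ + _] xM; rewrite /lift_class xM.
by case: ifP => // rxM [-> ->].
Qed.

Lemma level_pairing_reverses sigma Z rho :
  level_pairing (lift_class sigma Z) rho -> reverses sigma (single Z) rho (lift_choice Z).
Proof.
move=> lp; apply/forallP => x; apply/implyP => xM.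
by have [_ _ ->] := level_pairing_single lp xM; case: (level _ _ x).
Qed.

Lemma level_pairing_transfer sigma sigma' Z Z' rho :
    level_pairing (lift_class sigma Z) rho -> single Z' = single Z ->
    reverses sigma' (single Z) rho (lift_choice Z') ->
  level_pairing (lift_class sigma' Z') rho.
Proof.
move=> lp eq_single /forallP rev; apply/level_pairingP => x.
have [rhoK _ fix_rho] := level_pairingP _ _ lp x.
rewrite /lift_class eq_single; have [xM | xM] := boolP (x.1 \in single Z).
  have [rxM -> _] := level_pairing_single lp xM.
  rewrite rxM /=; move/implyP: (rev x) => /(_ xM).
  by case: (level _ _ (rho x)); case: (level _ _ x).
have rx : rho x = x by apply: fix_rho; rewrite /lift_class (negbTE xM).
by rewrite rx (negbTE xM); split.
Qed.

Definition reversing_choice sigma M rho : {ffun T * T -> bool} :=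
  odflt [ffun=> false] [pick k : {ffun T * T -> bool} | reverses sigma M rho k].

Lemma reverses_reversing_choice sigma M rho :
    (exists k : {ffun T * T -> bool}, reverses sigma M rho k) ->
  reverses sigma M rho (reversing_choice sigma M rho).
Proof.
case=> k rev_k; rewrite /reversing_choice.
by case: pickP => [k' // | /(_ k)]; rewrite rev_k.
Qed.

Definition shift sigma sigma' Z rho := toggle Z (fun g =>
  reversing_choice sigma (single Z) rho g (+) reversing_choice sigma' (single Z) rho g).

Lemma shift_inj sigma sigma' rho : injective (fun Z => shift sigma sigma' Z rho).
Proof.
move=> Z1 Z2 /= eq_shift.
have eq_single : single Z1 = single Z2.
  by have := congr1 single eq_shift; rewrite !single_toggle.
by move: eq_shift; rewrite /shift eq_single => /(can_inj (toggleK _)).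
Qed.

Definition pairings sigma Z :=
  [set rho : {ffun dart -> dart} | level_pairing (lift_class sigma Z) rho].

Section Shift.
Variables (sigma sigma' : T * T -> bool) (Z : {set dart}).
Variable rho : dart -> dart.
Hypothesis rho_pairing : level_pairing (lift_class sigma Z) rho.
Hypothesis reversible' : exists k : {ffun T * T -> bool}, reverses sigma' (single Z) rho k.

Lemma level_pairing_shift :
  level_pairing (lift_class sigma' (shift sigma sigma' Z rho)) rho.
Proof.
have rhoM x : x.1 \in single Z -> (rho x).1 \in single Z.
  by move=> /(level_pairing_single rho_pairing)[].
have rev_sigma : reverses sigma (single Z) rho (reversing_choice sigma (single Z) rho).
  by apply: reverses_reversing_choice; exists (lift_choice Z); apply: level_pairing_reverses.
apply: level_pairing_transfer rho_pairing (single_toggle _ _) _.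
rewrite (eq_reverses sigma' rhoM (k2 := fun g => lift_choice Z g (+)
  reversing_choice sigma (single Z) rho g (+) reversing_choice sigma' (single Z) rho g)).
  exact: reverses_xor (level_pairing_reverses rho_pairing) rev_sigma
                      (reverses_reversing_choice reversible').
by move=> g /lift_choice_toggle ->; rewrite addbA.
Qed.

Hypothesis Z_valid : valid sigma Z.

Lemma lift_class_fibres_shift c :
  #|[set x | lift_class sigma' (shift sigma sigma' Z rho) x == c]| =
  #|[set x | lift_class sigma Z x == c]|.
Proof.
apply: lift_class_fibres_eq; first exact: single_toggle.
  exact: level_pairing_balanced level_pairing_shift.
exact: valid_balanced.
Qed.

Lemma card_pairings_shift_le :
  #|pairings sigma' (shift sigma sigma' Z rho)| <= #|pairings sigma Z|.
Proof. by apply: card_level_pairing_le => c; rewrite lift_class_fibres_shift. Qed.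

Lemma valid_shift : valid sigma' (shift sigma sigma' Z rho).
Proof.
case/andP: Z_valid => subZ /forallP deg_r; rewrite /valid toggle_sub //=.
apply/forallP => w; apply/forallP => b; have /forallP/(_ b) := deg_r w.
by rewrite !degree_split doubled_toggle lift_class_fibres_shift.
Qed.

End Shift.

Lemma card_valid_le sigma sigma' :
    (forall Z (rho : {ffun dart -> dart}), valid sigma Z ->
       level_pairing (lift_class sigma Z) rho ->
       exists k : {ffun T * T -> bool}, reverses sigma' (single Z) rho k) ->
  #|[set Z | valid sigma Z]| <= #|[set Z | valid sigma' Z]|.
Proof.
(* Z is counted as the sum of 1 / #|pairings s Z| over its pairings rho; the shift
   maps the pairs (Z, rho) injectively and does not decrease these weights. *)
move=> reversible'.
pose P s := [set p : {set dart} * {ffun dart -> dart} |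
  valid s p.1 && (p.2 \in pairings s p.1)].
pose weight s (p : {set dart} * {ffun dart -> dart}) : rat := (#|pairings s p.1|%:R)^-1%R.
have card_validE s : (#|[set Z | valid s Z]|%:R = \sum_(p in P s) weight s p)%R.
  rewrite (@card_weighted_sum rat _ _ _ (pairings s)) => [|Z]; last first.
    rewrite inE => /valid_balanced/level_pairing_exists[rho rho_pairing].
    by apply/set0Pn; exists rho; rewrite inE.
  by apply: eq_bigl => p; rewrite !inE.
rewrite -(ler_nat rat) !card_validE.
apply: (@ler_sum_inj rat _ _ (P sigma) (P sigma')
  (fun p => (shift sigma sigma' p.1 p.2, p.2)) (weight sigma) (weight sigma')).
- move=> [Z1 rho1] [Z2 rho2] _ _ [/= eq_shift eq_rho]; rewrite eq_rho in eq_shift *.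
  by rewrite (shift_inj eq_shift).
- move=> [Z rho]; rewrite !inE /= => /andP[valid_Z rho_pairing].
  have reversible_Z := reversible' Z rho valid_Z rho_pairing.
  have pairings_gt0 s Z' : level_pairing (lift_class s Z') rho ->
      (0 < #|pairings s Z'|%:R :> rat)%R.
    by move=> lp; rewrite ltr0n; apply/card_gt0P; exists rho; rewrite inE.
  rewrite valid_shift // level_pairing_shift //; split=> //.
  by rewrite /weight lef_pV2 ?posrE ?pairings_gt0 ?ler_nat ?card_pairings_shift_le
             ?level_pairing_shift.
- by move=> p _; rewrite invr_ge0 ler0n.
Qed.

Lemma crossing_reverses sigma Z (rho : dart -> dart) :
    level_pairing (lift_class sigma Z) rho ->
  exists k : {ffun T * T -> bool}, reverses (fun=> true) (single Z) rho k.
Proof.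
move=> lp; pose X := [set x : dart | x.1 \in single Z].
pose other_end x : dart := (x.1, ~~ x.2).
have other_endK : involutive other_end by move=> [g t]; rewrite /other_end negbK.
have rhoK : involutive rho by move=> x; have [] := level_pairingP _ _ lp x.
have [c c_neq] : exists c : _ -> bool,
    {in X, forall x, c (other_end x) != c x /\ c (rho x) != c x}.
  apply: involutions_two_colouring other_endK rhoK _ _ _ _ => x; rewrite inE => xM.
  - by rewrite inE.
  - by rewrite inE; have [] := level_pairing_single lp xM.
  - by case: x {xM} => g []; rewrite /other_end /= xpair_eqE eqxx.
  - have [_ _] := level_pairing_single lp xM.
    by apply: contraPneq => ->; case: (level _ _ x).
have levelE x : x \in X -> level (fun=> true) [ffun g => c (g, false)] x = c x.
  case: x => g [] xX; rewrite /level ffunE /= ?addbT ?addbF //.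
  have gX : (g, false) \in X by move: xX; rewrite !inE.
  by have [] := c_neq _ gX; case: (c (g, false)); case: (c (g, true)).
exists [ffun g => c (g, false)]; apply/forallP => x; apply/implyP => xM.
have xX : x \in X by rewrite inE.
have rX : rho x \in X by rewrite inE; have [] := level_pairing_single lp xM.
by rewrite !levelE //; have [] := c_neq x xX.
Qed.

End Lifts.

Section TwoCovers.
Variables (T : finType) (e : rel T) (e_sym : symmetric e) (e_irr : irreflexive e).

Definition oriented_edges : {set T * T} :=
  [set g | e g.1 g.2 & enum_rank g.1 < enum_rank g.2].

Definition edge_sign (s : {set T} -> bool) (g : T * T) := s [set g.1; g.2].

Definition lift_edge sigma (z : (T * T) * bool) : {set T * bool} :=
  [set (z.1.1, z.2); (z.1.2, z.2 (+) sigma z.1)].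

Let lifts := [set z : (T * T) * bool | z.1 \in oriented_edges].

Lemma oriented_edge_neq g : g \in oriented_edges -> g.1 != g.2.
Proof. by rewrite inE => /andP[_]; apply: contraTneq => ->; rewrite ltnn. Qed.

Lemma lift_edge_inj sigma : {in lifts &, injective (lift_edge sigma)}.
Proof.
move=> [[u1 v1] a1] [[u2 v2] a2]; rewrite !inE /= => /andP[_ lt1] /andP[_ lt2] eq_lift.
have mem_lift z x :
    x \in lift_edge sigma z = (x == (z.1.1, z.2)) || (x == (z.1.2, z.2 (+) sigma z.1)).
  by rewrite !inE.
have u1_in : (u1, a1) \in lift_edge sigma (u2, v2, a2) by rewrite -eq_lift mem_lift eqxx.
have v1_in : (v1, a1 (+) sigma (u1, v1)) \in lift_edge sigma (u2, v2, a2).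
  by rewrite -eq_lift mem_lift eqxx orbT.
have u2_in : (u2, a2) \in lift_edge sigma (u1, v1, a1) by rewrite eq_lift mem_lift eqxx.
move: u1_in v1_in u2_in; rewrite !mem_lift /= !xpair_eqE.
case/orP=> /andP[/eqP eq_u /eqP eq_a].
  subst u2 a2; case/orP=> /andP[/eqP eq_v _]; last by rewrite eq_v.
  by move: lt1; rewrite eq_v ltnn.
subst u1; move=> _ /orP[] /andP[/eqP eq_u _]; first by move: lt2; rewrite eq_u ltnn.
by move: (ltn_trans lt2 lt1); rewrite eq_u ltnn.
Qed.

Lemma edges_two_cover s : edges (two_cover e s) = lift_edge (edge_sign s) @: lifts.
Proof.
apply/setP => E; apply/imsetP/imsetP => -[]; last first.
  move=> z; rewrite !inE => /andP[e_z _] ->.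
  exists ((z.1.1, z.2), (z.1.2, z.2 (+) edge_sign s z.1)) => //.
  by rewrite inE /two_cover /= e_z addKb eqxx.
move=> [[u a] [v b]]; rewrite inE /two_cover /= => /andP[e_uv /eqP s_uv] ->.
have neq_uv : (enum_rank u : nat) != enum_rank v.
  by apply: contraTneq e_uv => /val_inj/enum_rank_inj ->; rewrite e_irr.
case: (ltngtP (enum_rank u) (enum_rank v)) neq_uv => // [lt_uv | lt_vu] _.
  exists ((u, v), a); first by rewrite !inE /= e_uv.
  by rewrite /lift_edge /edge_sign /= -s_uv addKb.
exists ((v, u), b); first by rewrite !inE /= e_sym e_uv.
by rewrite /lift_edge /edge_sign /= [[set v; u]]setUC -s_uv (addbC a) addKb setUC.
Qed.

Lemma degree_lift sigma (Z : {set (T * T) * bool}) w b : Z \subset lifts ->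
  #|[set E in lift_edge sigma @: Z | (w, b) \in E]| = degree sigma Z w b.
Proof.
move=> /subsetP subZ; rewrite card_sep_imset => [|z1 z2 /subZ + /subZ]; last first.
  exact: lift_edge_inj.
rewrite /degree -[RHS](@card_in_imset _ _ (lift_through sigma ^~ b)).
  apply: eq_card => -[[u v] a]; rewrite !inE; apply/andP/imsetP => [[zZ] | ].
    rewrite !xpair_eqE /= => /orP[] /andP[/eqP-> /eqP->].
      by exists ((u, v), false); rewrite ?inE /lift_through /= ?eqxx addbF.
    by exists ((u, v), true); rewrite ?inE /lift_through /= ?eqxx addbK.
  move=> [[[u' v'] t]]; rewrite inE /= => /andP[/eqP <- zZ] [-> -> ->]; split=> //.
  by case: t zZ; rewrite /= ?addbF ?addbK eqxx ?orbT.
move=> [g t] [g' t']; rewrite !inE /= => /andP[/eqP end_w zZ] /andP[/eqP end_w' _] [eq_g _].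
have := subZ _ zZ; rewrite inE /= => /oriented_edge_neq; subst g'; clear zZ.
by case: t t' end_w end_w' => -[]; rewrite /endpoint //= => <- ->; rewrite eqxx.
Qed.

Lemma h_r_two_cover (r : T -> int) s :
  h_r (two_cover e s) (lift_r r) = #|[set Z | valid oriented_edges r (edge_sign s) Z]|.
Proof.
set sigma := edge_sign s; have lift_inj := lift_edge_inj (sigma := sigma).
rewrite /h_r -(card_in_imset (f := fun Z : {set (T * T) * bool} => lift_edge sigma @: Z)).
  apply: eq_card => S; rewrite inE; apply/andP/imsetP.
    case=> S_sub /forallP S_deg; exists (lifts :&: lift_edge sigma @^-1: S).
      rewrite inE /valid subsetIl; apply/forallP => w; apply/forallP => b.
      by rewrite -degree_lift ?subsetIl // imset_setI_preimset -?edges_two_cover.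
    by rewrite imset_setI_preimset -?edges_two_cover.
  case=> Z; rewrite inE => /andP[Z_sub /forallP Z_deg] ->; split.
    by rewrite edges_two_cover imsetS.
  by apply/forallP => -[w b]; rewrite degree_lift //; move/forallP: (Z_deg w).
move=> Z1 Z2; rewrite !inE => /andP[sub1 _] /andP[sub2 _] /= eq_lift.
by rewrite -(setI_preimset_imset lift_inj sub1) eq_lift setI_preimset_imset.
Qed.

End TwoCovers.

Theorem theorem1p8 (T : finType) (e : rel T) (e_sym : symmetric e)
  (e_irr : irreflexive e) (r : T -> int) (s : {set T} -> bool) :
  (h_r (two_cover e s) (lift_r r) <= h_r (bip_double_cover e) (lift_r r))%N.
Proof.
rewrite /bip_double_cover !(h_r_two_cover e_sym e_irr).
by apply: card_valid_le => Z rho _; apply: crossing_reverses.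
Qed.
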